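(* Let $G$ be a finite group and let $C(G)^*$ denote the set of non-trivial cyclic subgroups of $G$. Suppose that at least one of the following conditions holds: (a) $m_G(H_1)=m_G(H_2)=m^*(G)$ for all $H_1,H_2\in C(G)^*$; (b) $m_G(H_1)=m_G(H_2)$ for all non-trivial abelian subgroups $H_1,H_2$ of $G$. Then either $G\cong C_p$ for some prime $p$, or $G\cong Q_8$ (the quaternion group of order $8$).
   Context: For a finite group $G$ and a subgroup $H\leq G$, the Chermak-Delgado measure of $H$ in $G$ is $m_G(H)=|H|\,|C_G(H)|$, where $C_G(H)$ is the centralizer of $H$ in $G$. Also $m^*(G)=\max\{m_G(H)\mid H\leq G\}$. *)

From mathcomp Require Import all_boot all_fingroup all_solvable zmodp.
Set Implicit Arguments. Unset Strict Implicit. Unset Printing Implicit Defensive.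
Local Open Scope group_scope.

(* Chermak-Delgado measure m_G(H) = |H| * |C_G(H)| *)
Definition cdm (gT : finGroupType) (G H : {set gT}) : nat := #|H| * #|'C_G(H)|.

Definition mstar (gT : finGroupType) (G : {group gT}) : nat :=
  \max_(H : {group gT} | H \subset G) cdm G H.

Definition nt_cyclic_sub (gT : finGroupType) (G H : {group gT}) : bool :=
  [&& H \subset G, cyclic H & H != 1%G].

Definition nt_abelian_sub (gT : finGroupType) (G H : {group gT}) : bool :=
  [&& H \subset G, abelian H & H != 1%G].

From mathcomp Require Import all_boot all_fingroup all_solvable zmodp zify.
Set Implicit Arguments. Unset Strict Implicit. Unset Printing Implicit Defensive.
Local Open Scope group_scope.

(* Either hypothesis makes the element measure #[x] * |C_G[x]| = m_G(<x>)
   the same number M for every x <> 1, and forces Z(G) <= <x> for every x <> 1: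
   the abelian group <x>Z(G) has the same centralizer as <x>, so its measure
   can only be at most that of <x> if it equals <x>.
   An element of order q central in a Sylow q-subgroup shows that the q-part
   of M exceeds that of |G|, while an element of prime order q <> p has
   measure whose p-part is at most that of |G|; so G is a p-group.  Then Z(G)
   is the unique subgroup of order p, so G is cyclic or generalized
   quaternion.  A central element of order p gives M = p|G|, which pins down
   |G| = p in the first case, and #[x]^2 <= M for a generator x of order
   2^(n-1) of Q_(2^n) gives n = 3 in the second. *)

Section UniformElementMeasure.

Variables (gT : finGroupType) (G : {group gT}) (M : nat).
Hypothesis measureG : forall x, x \in G -> x != 1 -> (#[x] * #|'C_G[x]|)%N = M.

Lemma logn_card_lt_measure q : prime q -> q %| #|G| -> logn q #|G| < logn q M.
Proof.
move=> q_pr qG; have [S sylS] := Sylow_exists q G.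
have [sSG qS _] := and3P sylS; have oS := card_Hall sylS.
have ntS : S :!=: 1.
  by rewrite -cardG_gt1 oS p_part_gt1 mem_primes q_pr cardG_gt0.
have ntZS : 'Z(S) :!=: 1.
  by apply: contra ntS => /eqP/(trivg_center_pgroup qS) ->.
have [_ qZ _] := pgroup_pdiv (pgroupS (center_sub S) qS) ntZS.
have [x Zx ox] := Cauchy q_pr qZ.
have [Sx cSx] := setIP Zx.
have Gx : x \in G := subsetP sSG x Sx.
have ntx : x != 1 by rewrite -order_gt1 ox prime_gt1.
have sSC : S \subset 'C_G[x] by rewrite subsetI sSG sub_cent1.
rewrite -(measureG Gx ntx) ox lognM ?cardG_gt0 ?prime_gt0 // (logn_prime q q_pr).
rewrite eqxx add1n ltnS -logn_part -oS dvdn_leq_log ?cardG_gt0 //.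
exact: cardSg.
Qed.

Lemma uniform_measure_pgroup : G :!=: 1 -> (pdiv #|G|).-group G.
Proof.
rewrite -cardG_gt1 => G1; set p := pdiv #|G|.
have p_pr : prime p := pdiv_prime G1.
apply/pnatP => [|q q_pr qG]; first exact: cardG_gt0.
rewrite inE /=; apply: contraT => nqp.
have [y Gy oy] := Cauchy q_pr qG.
have nty : y != 1 by rewrite -order_gt1 oy prime_gt1.
(* the p-part of M is that of |C_G[y]|, since #[y] = q is prime to p *)
have := logn_card_lt_measure p_pr (pdiv_dvd _).
rewrite -(measureG Gy nty) oy lognM ?cardG_gt0 ?prime_gt0 // (logn_prime p q_pr).
rewrite eq_sym (negPf nqp) add0n ltnNge dvdn_leq_log ?cardG_gt0 //.
exact: cardSg (subsetIl _ _).
Qed.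

Lemma measure_center z : z \in 'Z(G) -> z != 1 -> M = (#[z] * #|G|)%N.
Proof.
move=> /setIP[Gz cGz] ntz; rewrite -(measureG Gz ntz).
by rewrite (setIidPl (_ : G \subset 'C[z])) // sub_cent1.
Qed.

Lemma measure_pgroup (p : nat) : p.-group G -> G :!=: 1 -> M = (p * #|G|)%N.
Proof.
move=> pG ntG; have [p_pr _ _] := pgroup_pdiv pG ntG.
have ntZ : 'Z(G) :!=: 1.
  by apply: contra ntG => /eqP/(trivg_center_pgroup pG) ->.
have [_ pZ _] := pgroup_pdiv (pgroupS (center_sub G) pG) ntZ.
have [z Zz oz] := Cauchy p_pr pZ.
by rewrite (measure_center Zz) ?oz // -order_gt1 oz prime_gt1.
Qed.

Lemma uniform_measure_cyclic (p : nat) :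
  p.-group G -> cyclic G -> G :!=: 1 -> #|G| = p.
Proof.
move=> pG /cyclicP[g defG] ntG.
have Zg : g \in 'Z(G).
  by rewrite (center_idP _) ?defG ?cycle_id ?cycle_abelian.
have ntg : g != 1 by apply: contra ntG; rewrite defG => /eqP->; rewrite cycle1.
have := measure_center Zg ntg; rewrite (measure_pgroup pG ntG) orderE -defG.
by move/eqP; rewrite eqn_pmul2r ?cardG_gt0 // => /eqP.
Qed.

Lemma uniform_measure_quaternion n : n > 2 -> G \isog 'Q_(2 ^ n) -> n = 3.
Proof.
move=> n_gt2 isoG; have oG : #|G| = (2 ^ n)%N.
  by rewrite (card_isog isoG) card_quaternion.
have pG : 2.-group G by rewrite /pgroup oG pnatX pnat_id.
have ntG : G :!=: 1 by rewrite -cardG_gt1 oG -{1}(expn0 2) ltn_exp2l //; lia.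
have [[x y] [_ Gx ox _] _] := generators_quaternion n_gt2 isoG.
have ntx : x != 1 by rewrite -order_gt1 ox -{1}(expn0 2) ltn_exp2l //; lia.
have sxC : <[x]> \subset 'C_G[x] by rewrite subsetI !cycle_subG Gx cent1id.
have := leq_mul (leqnn #[x]) (subset_leq_card sxC).
rewrite -orderE measureG // (measure_pgroup pG ntG) oG ox -expnS -expnD.
by rewrite leq_exp2l //; lia.
Qed.

End UniformElementMeasure.

Section CenterInCycles.

Variables (gT : finGroupType) (G : {group gT}) (p : nat).
Hypotheses (pG : p.-group G) (ntG : G :!=: 1).
Hypothesis centerG : forall x, x \in G -> x != 1 -> 'Z(G) \subset <[x]>.

Lemma center_eq_prime_cycle x : x \in G -> prime #[x] -> 'Z(G) = <[x]>.
Proof.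
move=> Gx prx; have ntx : x != 1 by rewrite -order_gt1 prime_gt1.
have sZx := centerG Gx ntx.
have ntZ : #|'Z(G)| != 1%N.
  by rewrite -trivg_card1; apply: contra ntG => /eqP/(trivg_center_pgroup pG) ->.
have := cardSg sZx; rewrite -orderE => /(prime_nt_dvdP prx ntZ) oZ.
by apply/eqP; rewrite eqEcard sZx -orderE oZ leqnn.
Qed.

Lemma card_Ohm1_center_in_cycles : #|'Ohm_1(G)| = p.
Proof.
have [p_pr _ _] := pgroup_pdiv pG ntG.
have ntZ : 'Z(G) :!=: 1.
  by apply: contra ntG => /eqP/(trivg_center_pgroup pG) ->.
have [_ pZ _] := pgroup_pdiv (pgroupS (center_sub G) pG) ntZ.
have [z Zz oz] := Cauchy p_pr pZ.
have Gz : z \in G := subsetP (center_sub G) z Zz.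
have defZ : 'Z(G) = <[z]> by rewrite (center_eq_prime_cycle Gz) // oz.
have sZO : 'Z(G) \subset 'Ohm_1(G).
  by rewrite defZ Ohm1Eprime cycle_subG mem_gen // inE Gz oz.
have sOZ : 'Ohm_1(G) \subset 'Z(G).
  rewrite Ohm1Eprime gen_subG; apply/subsetP => x /setIdP[Gx prx].
  by rewrite /= (center_eq_prime_cycle Gx prx) cycle_id.
have -> : 'Ohm_1(G) = 'Z(G) by apply/eqP; rewrite eqEsubset sOZ.
by rewrite defZ -orderE.
Qed.

End CenterInCycles.

Section MeasureOfCycles.

Variables (gT : finGroupType) (G : {group gT}).

Lemma cdm_cycle x : cdm G <[x]> = (#[x] * #|'C_G[x]|)%N.
Proof. by rewrite /cdm -orderE cent_cycle. Qed.

Lemma nt_cyclic_sub_cycle x : x \in G -> x != 1 -> nt_cyclic_sub G <[x]>%G.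
Proof.
by move=> Gx ntx; rewrite /nt_cyclic_sub cycle_subG Gx cycle_cyclic -val_eqE /= cycle_eq1.
Qed.

Lemma nt_abelian_sub_cycle x : x \in G -> x != 1 -> nt_abelian_sub G <[x]>%G.
Proof.
by move=> Gx ntx; rewrite /nt_abelian_sub cycle_subG Gx cycle_abelian -val_eqE /= cycle_eq1.
Qed.

Lemma nt_abelian_sub_cycle_center x :
  x \in G -> x != 1 -> nt_abelian_sub G (<[x]> <*> 'Z(G))%G.
Proof.
move=> Gx ntx; have cGZ : G \subset 'C('Z(G)) by rewrite centsC subsetIr.
rewrite /nt_abelian_sub join_subG cycle_subG Gx center_sub abelianY.
rewrite cycle_abelian center_abelian cent_cycle sub_cent1 (subsetP cGZ) //=.
rewrite -val_eqE /=.
by apply: contra ntx => /eqP Y1; rewrite -cycle_eq1 -subG1 -Y1 joing_subl.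
Qed.

Lemma center_sub_cycle_of_cdm x :
  cdm G (<[x]> <*> 'Z(G)) <= cdm G <[x]> -> 'Z(G) \subset <[x]>.
Proof.
rewrite /cdm; have cGZ : G \subset 'C('Z(G)) by rewrite centsC subsetIr.
have -> : 'C_G(<[x]> <*> 'Z(G)) = 'C_G(<[x]>).
  by rewrite centY setICA (setIidPl cGZ) setIC.
rewrite leq_pmul2r ?cardG_gt0 // => le_xZ_x.
suff -> : <[x]> :=: <[x]> <*> 'Z(G) by rewrite joing_subr.
by apply/eqP; rewrite eqEcard joing_subl.
Qed.

End MeasureOfCycles.

Theorem corollary1p2 (gT : finGroupType) (G : {group gT}) :
  G :!=: 1 ->
  ((forall H1 H2 : {group gT}, nt_cyclic_sub G H1 -> nt_cyclic_sub G H2 ->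
      cdm G H1 = cdm G H2 /\ cdm G H2 = mstar G)
   \/
   (forall H1 H2 : {group gT}, nt_abelian_sub G H1 -> nt_abelian_sub G H2 ->
      cdm G H1 = cdm G H2)) ->
  (exists2 p : nat, prime p & G \isog Zp p) \/ G \isog 'Q_8.
Proof.
move=> ntG hyp; have [x0 Gx0 ntx0] := trivgPn _ ntG.
have measureG x : x \in G -> x != 1 -> (#[x] * #|'C_G[x]|)%N = cdm G <[x0]>.
  move=> Gx ntx; rewrite -cdm_cycle; case: hyp => [cycG | abG].
    by have [] := cycG _ _ (nt_cyclic_sub_cycle Gx ntx) (nt_cyclic_sub_cycle Gx0 ntx0).
  exact: abG (nt_abelian_sub_cycle Gx ntx) (nt_abelian_sub_cycle Gx0 ntx0).
have centerG x : x \in G -> x != 1 -> 'Z(G) \subset <[x]>.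
  move=> Gx ntx; apply: center_sub_cycle_of_cdm; case: hyp => [cycG | abG].
    have cycx := nt_cyclic_sub_cycle Gx ntx; have [_ ->] := cycG _ _ cycx cycx.
    by apply: leq_bigmax_cond; rewrite join_subG cycle_subG Gx center_sub.
  have abxZ := nt_abelian_sub_cycle_center Gx ntx.
  by rewrite (abG _ _ abxZ (nt_abelian_sub_cycle Gx ntx)).
have pG := uniform_measure_pgroup measureG ntG; set p := pdiv #|G| in pG.
have [p_pr _ _] := pgroup_pdiv pG ntG.
have /(prime_Ohm1P pG ntG)/orP[cycG | /andP[_ /eqP/quaternion_classP[n n_gt2 isoG]]]
  := card_Ohm1_center_in_cycles pG ntG centerG.
  left; exists p; rewrite // isog_cyclic_card // prime_cyclic ?card_Zp ?prime_gt0 //.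
  by rewrite (uniform_measure_cyclic measureG pG cycG ntG) eqxx.
by have n3 := uniform_measure_quaternion measureG n_gt2 isoG; subst n; right.
Qed.
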